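(* Let $\mathbb{K}$ be a field, let $P_1, P_2 \in \mathbb{K}[X]$ be irreducible, let $f : \mathbb{K}[X]/(P_1) \to \mathbb{K}[X]/(P_2)$ be a ring isomorphism stabilizing $\mathbb{K}$, and let $n > 1$ be an integer. Then $S_f$ is coprime to $P_2$ if and only if $f_{X,n} : \mathbb{K}[X]/(P_1^n) \to \mathbb{K}[X]/(P_2^n)$ is an isomorphism.
   Context: A ring homomorphism $f : A \to B$ between $\mathbb{K}$-algebras stabilizes $\mathbb{K}$ if there is a field automorphism $\sigma_f$ of $\mathbb{K}$ with $f(a) = \sigma_f(a)$ for all $a \in \mathbb{K}$. For a field automorphism $\sigma$ of $\mathbb{K}$, $\sigma^X$ is the ring automorphism of $\mathbb{K}[X]$ applying $\sigma$ to coefficients; $A\circ Q$ denotes $A(Q(X))$. For a ring isomorphism $f : \mathbb{K}[X]/(P_1) \to \mathbb{K}[X]/(P_2)$ stabilizing $\mathbb{K}$: $Q_f$ is the unique polynomial of degree $< \deg P_2$ such that $f$ sends the class of $X$ to the class of $Q_f$ (then $f(\text{class of }P) = \text{class of } \sigma_f^X(P)\circ Q_f$); $S_f\in\mathbb{K}[X]$ is the polynomial with $\sigma_f^X(P_1)\circ Q_f = S_f P_2$ (it exists because $\sigma_f^X(P_1)\circ Q_f$ is divisible by $P_2$); and $f_{X,n} : \mathbb{K}[X]/(P_1^n) \to \mathbb{K}[X]/(P_2^n)$ is the well-defined ring homomorphism sending the class of $P$ to the class of $\sigma_f^X(P)\circ Q_f$. *)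

From HB Require Import structures.
From mathcomp Require Import all_boot all_order all_algebra.
Set Implicit Arguments. Unset Strict Implicit. Unset Printing Implicit Defensive.
Import GRing.Theory.
Local Open Scope ring_scope.

(* The ideal (P) of K[X] equals the ideal generated by the monic associate of P.
   MathComp's {poly %/ h} quotients by h only when h is monic of size > 1
   (otherwise by 'X), so we quotient by the monic associate. *)
Definition monicize (K : fieldType) (P : {poly K}) : {poly K} :=
  (lead_coef P)^-1 *: P.

Definition qring (K : fieldType) (P : {poly K}) := {poly %/ monicize P}.

Definition cls (K : fieldType) (P : {poly K}) (q : {poly K}) : qring P :=
  in_qpoly (monicize P) q.

(* Q_f : the unique polynomial of degree < deg P2 whose class is f(class of X),
   i.e. the canonical (reduced) representative of f (class of X). *)
Definition Qf (K : fieldType) (P1 P2 : {poly K}) (f : qring P1 -> qring P2)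
  : {poly K} := (f (cls P1 'X) : {poly K}).

(* S_f : the polynomial with sigma^X(P1) o Q_f = S_f * P2 *)
Definition Sf (K : fieldType) (P1 P2 : {poly K}) (sigma : K -> K)
  (f : qring P1 -> qring P2) : {poly K} :=
  (map_poly sigma P1 \Po Qf f) %/ P2.

Definition fXn (K : fieldType) (P1 P2 : {poly K}) (n : nat) (sigma : K -> K)
  (f : qring P1 -> qring P2) : qring (P1 ^+ n) -> qring (P2 ^+ n) :=
  fun q => cls (P2 ^+ n) (map_poly sigma (q : {poly K}) \Po Qf f).

From HB Require Import structures.
From mathcomp Require Import all_boot all_order all_algebra.
From mathcomp Require Import ring.
Set Implicit Arguments.
Unset Strict Implicit.
Unset Printing Implicit Defensive.
Import GRing.Theory.
Local Open Scope ring_scope.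

(* Put F p := sigma^X(p) o Q_f, a ring endomorphism of K[X] such that f maps the
   class of p to the class of F p.  Then F P1 = S_f P2, so F maps the ideal
   (P1^k) into (P2^k), and P2 | F p iff P1 | p because f is injective.
   If S_f is coprime to P2, writing p = r P1^k gives F p = F r S_f^k P2^k, so
   by induction P2^k | F p forces P1^k | p; and a Hensel-type lifting, using a
   Bezout relation u S_f^k + v P2 = 1 and the surjectivity of f, shows that F
   hits every class modulo P2^k.  Conversely, if
   S_f is not coprime to the irreducible P2 then P2 | S_f, and
   F (P1^(n-1)) = (S_f P2)^(n-1) is divisible by P2^(2n-2), hence by P2^n,
   although P1^n does not divide P1^(n-1): f_{X,n} is not injective. *)

Lemma inj_surj_bijective (T : choiceType) (U : eqType) (g : T -> U) :
  injective g -> (forall y, exists x, g x = y) -> bijective g.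
Proof.
move=> g_inj g_surj; have preim y : exists x, g x == y.
  by have [x <-] := g_surj y; exists x.
exists (fun y => xchoose (preim y)) => [x|y]; last exact: eqP (xchooseP (preim y)).
by apply: g_inj; apply: eqP (xchooseP (preim (g x))).
Qed.

HB.instance Definition _ (K : fieldType) (P : {poly K}) :=
  GRing.RMorphism.copy (@cls K P) (in_qpoly (monicize P)).

Section QuotientClass.
Variables (K : fieldType) (P : {poly K}).
Hypothesis sizeP : (1 < size P)%N.

Let P_neq0 : P != 0. Proof. by rewrite -size_poly_gt0 ltnW. Qed.

Lemma size_monicize : size (monicize P) = size P.
Proof. by rewrite size_scale // invr_eq0 lead_coef_eq0. Qed.

Lemma mk_monic_monicize : mk_monic (monicize P) = monicize P.
Proof.
rewrite /mk_monic size_monicize sizeP /=.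
by rewrite monicE lead_coefZ mulVf ?lead_coef_eq0 ?eqxx.
Qed.

Lemma clsE q : val (cls P q) = q %% P.
Proof.
rewrite /= mk_monic_monicize -Pdiv.IdomainMonic.modpE; last first.
  by rewrite -mk_monic_monicize monic_mk_monic.
by rewrite /monicize modpZr ?unitfE ?invr_eq0 ?lead_coef_eq0.
Qed.

Lemma cls_eq0 q : (cls P q == 0) = (P %| q).
Proof. by rewrite -val_eqE clsE. Qed.

Lemma cls_eq a b : (cls P a == cls P b) = (P %| a - b).
Proof. by rewrite -subr_eq0 -rmorphB cls_eq0. Qed.

Lemma clsK (x : qring P) : cls P x = x.
Proof.
apply: val_inj; rewrite clsE modp_small //.
have := size_mk_monic x.
by rewrite [in X in (_ < X)%N -> _]mk_monic_monicize size_monicize.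
Qed.

End QuotientClass.

Lemma size_exp_gt1 (K : fieldType) (P : {poly K}) n :
  (1 < size P)%N -> (0 < n)%N -> (1 < size (P ^+ n))%N.
Proof.
move=> sP n_gt0; apply: (leq_trans sP); apply: dvdp_leq; last exact: dvdp_exp.
by rewrite expf_neq0 // -size_poly_gt0 ltnW.
Qed.

Definition subst_poly (R S : comNzRingType) (sigma : {rmorphism R -> S})
  (Q : {poly S}) : {poly R} -> {poly S} := comp_poly Q \o map_poly sigma.

HB.instance Definition _ (R S : comNzRingType) (sigma : {rmorphism R -> S}) Q :=
  GRing.RMorphism.on (subst_poly sigma Q).

Section Transport.
Variables (K : fieldType) (P1 P2 : {poly K}).
Hypotheses (sizeP1 : (1 < size P1)%N) (sizeP2 : (1 < size P2)%N).
Variables (f : {rmorphism qring P1 -> qring P2}) (sigma : {rmorphism K -> K}).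
Hypothesis f_stab : forall a : K, f (cls P1 a%:P) = cls P2 (sigma a)%:P.

Local Notation F := (subst_poly sigma (Qf f)).
Local Notation S := (Sf sigma f).

Lemma f_clsE p : f (cls P1 p) = cls P2 (F p).
Proof.
elim/poly_ind: p => [|p c IH]; first by rewrite !rmorph0.
rewrite !rmorphD !rmorphM /= IH f_stab -[f (cls P1 'X)]clsK //.
by rewrite /subst_poly /= map_polyC map_polyX comp_polyC comp_polyX.
Qed.

Lemma dvdp_substP1 : P2 %| F P1.
Proof.
have /eqP P1_cls0 : cls P1 P1 == 0 by rewrite cls_eq0.
by rewrite -cls_eq0 // -f_clsE P1_cls0 rmorph0.
Qed.

Lemma substP1E : F P1 = S * P2.
Proof. by rewrite divpK // dvdp_substP1. Qed.

Lemma subst_dvdp_exp k p : P1 ^+ k %| p -> P2 ^+ k %| F p.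
Proof.
move=> /dvdpP [c ->]; rewrite rmorphM rmorphXn /= substP1E exprMn mulrA.
by rewrite dvdp_mull.
Qed.

Lemma subst_dvdp_exp_double k : P2 %| S -> P2 ^+ (k + k) %| F (P1 ^+ k).
Proof.
move=> /dvdpP [c def_S]; rewrite rmorphXn /= substP1E def_S -mulrA exprMn.
by rewrite -expr2 -exprM mul2n -addnn dvdp_mull.
Qed.

Variable n : nat.
Hypothesis n_gt0 : (0 < n)%N.
Local Notation fX := (@fXn _ P1 P2 n sigma f).

Lemma fXn_cls p : fX (cls (P1 ^+ n) p) = cls (P2 ^+ n) (F p).
Proof.
apply/eqP; rewrite -[fX _]/(cls _ (F _)) cls_eq ?size_exp_gt1 // -rmorphB.
by rewrite subst_dvdp_exp // -cls_eq ?clsK ?size_exp_gt1.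
Qed.

Lemma fXn_not_injective : P2 %| S -> (1 < n)%N -> ~ injective fX.
Proof.
move=> P2_dvd_S n_gt1 fX_inj.
have /eqP : cls (P1 ^+ n) (P1 ^+ n.-1) = cls (P1 ^+ n) 0.
  apply: fX_inj; rewrite !fXn_cls !rmorph0; apply/eqP.
  rewrite cls_eq0 ?size_exp_gt1 //; apply: dvdp_trans (subst_dvdp_exp_double _ P2_dvd_S).
  by apply: dvdp_exp2l; case: n n_gt1 => [|[|m]] //= _; rewrite addnS !ltnS leq_addr.
rewrite cls_eq ?size_exp_gt1 // subr0 dvdp_Pexp2l //.
by apply/negP; rewrite -ltnNge ltn_predL.
Qed.

Hypothesis f_inj : injective f.

Lemma dvdp_substE p : (P2 %| F p) = (P1 %| p).
Proof. by rewrite -!cls_eq0 // -f_clsE -(rmorph0 f) (inj_eq f_inj). Qed.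

Hypothesis S_coprime : coprimep S P2.

Lemma subst_dvdp_expK k p : P2 ^+ k %| F p -> P1 ^+ k %| p.
Proof.
elim: k p => [|k IH] p; first by move=> _; rewrite expr0 dvd1p.
have P2_neq0 : P2 != 0 by rewrite -size_poly_gt0 ltnW.
move=> dvd_k1; have /dvdpP [r def_p] := IH p (dvdp_trans (dvdp_exp2l _ (leqnSn k)) dvd_k1).
move: dvd_k1; rewrite def_p rmorphM rmorphXn /= substP1E exprMn mulrA exprS.
rewrite dvdp_mul2r ?expf_neq0 // Gauss_dvdpl; last by rewrite coprimep_sym coprimep_expl.
by rewrite dvdp_substE exprS dvdp_mul2r // expf_neq0 // -size_poly_gt0 ltnW.
Qed.

Lemma fXn_inj : injective fX.
Proof.
have sizeP1n : (1 < size (P1 ^+ n))%N by exact: size_exp_gt1.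
move=> x y; rewrite -[x](clsK sizeP1n) -[y](clsK sizeP1n) !fXn_cls => /eqP.
rewrite cls_eq ?size_exp_gt1 // -rmorphB => /subst_dvdp_expK.
by rewrite -cls_eq // => /eqP.
Qed.

Hypothesis f_surj : forall y, exists x, f x = y.

Lemma subst_lift k t : exists p, P2 ^+ k %| F p - t.
Proof.
elim: k => [|k [p /dvdpP [E eE]]]; first by exists 0; rewrite expr0 dvd1p.
have /Bezout_eq1_coprimepP [[u v] /= uv1] := coprimep_expl k S_coprime.
have [x /eqP] := f_surj (cls P2 (- (u * E))).
rewrite -(clsK sizeP1 x) f_clsE cls_eq // opprK => /dvdpP [w ew].
exists (p + (x : {poly K}) * P1 ^+ k); apply/dvdpP; exists (E * v + w * S ^+ k).
rewrite rmorphD rmorphM rmorphXn /= substP1E exprMn exprS addrAC eE.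
have -> : F x = w * P2 - u * E by rewrite -ew addrK.
by rewrite -[E * _]mulr1 -uv1; ring.
Qed.

Lemma fXn_surj y : exists x, fX x = y.
Proof.
have [p dvd_p] := subst_lift n y; exists (cls (P1 ^+ n) p).
by rewrite fXn_cls -[RHS]clsK ?size_exp_gt1 //; apply/eqP; rewrite cls_eq ?size_exp_gt1.
Qed.

End Transport.

Theorem mainTheorem10 (K : fieldType) (P1 P2 : {poly K})
  (irr1 : irreducible_poly P1) (irr2 : irreducible_poly P2)
  (f : {rmorphism qring P1 -> qring P2}) (f_bij : bijective f)
  (sigma : {rmorphism K -> K}) (sigma_bij : bijective sigma)
  (f_stab : forall a : K, f (cls P1 a%:P) = cls P2 (sigma a)%:P)
  (n : nat) (hn : (1 < n)%N) :
  coprimep (@Sf K P1 P2 sigma f) P2 <-> bijective (@fXn K P1 P2 n sigma f).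
Proof.
have [[sizeP1 _] [sizeP2 _]] := (irr1, irr2).
have n_gt0 : (0 < n)%N := ltnW hn.
have f_surj y : exists x, f x = y by have [g _ gK] := f_bij; exists (g y).
split=> [S_coprime | /bij_inj fX_inj].
  apply: inj_surj_bijective; first exact: fXn_inj (bij_inj f_bij) S_coprime.
  exact: fXn_surj S_coprime f_surj.
rewrite coprimep_sym irreducible_poly_coprime //; apply/negP => P2_dvd_S.
exact: fXn_not_injective P2_dvd_S hn fX_inj.
Qed.
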